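(* Let $p\ge 2$ be an integer and let $C_p(n)=\frac{(pn)!}{((p-1)n+1)!\,n!}=\frac{1}{(p-1)n+1}\binom{pn}{n}$ be the Fuss–Catalan numbers. Then the sequence $\{C_p(n)\}_{n\geq0}$ is infinitely log-monotonic.
   Context: For a sequence $\{z_n\}$ of positive numbers, define the operator $R\{z_n\}=\{z_{n+1}/z_n\}$. A sequence of positive numbers $\{x_n\}$ is log-convex if $x_{n-1}x_{n+1}\ge x_n^2$ and log-concave if $x_{n-1}x_{n+1}\le x_n^2$, for all indices where these terms are defined. A sequence $\{z_n\}$ is log-monotonic of order $k$ if for every odd $r\le k-1$ the sequence $R^r\{z_n\}$ is log-concave and for every even $r\le k-1$ (including $r=0$) the sequence $R^r\{z_n\}$ is log-convex. It is infinitely log-monotonic if it is log-monotonic of order $k$ for every integer $k\ge0$. *)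

From mathcomp Require Import all_boot all_order all_algebra.
Set Implicit Arguments. Unset Strict Implicit. Unset Printing Implicit Defensive.
Import Order.TTheory GRing.Theory Num.Theory.
Local Open Scope ring_scope.

Definition ratio_seq {R : realFieldType} (z : nat -> R) : nat -> R :=
  fun n => z n.+1 / z n.

(* log-convex: x_{n-1} x_{n+1} >= x_n^2 for all indices where defined
   (sequence indexed by n >= 0, so for all n >= 1). *)
Definition log_convex {R : realFieldType} (x : nat -> R) : Prop :=
  forall n : nat, x n.+1 ^+ 2 <= x n * x n.+2.

Definition log_concave {R : realFieldType} (x : nat -> R) : Prop :=
  forall n : nat, x n * x n.+2 <= x n.+1 ^+ 2.

Definition log_monotonic_order {R : realFieldType} (k : nat) (z : nat -> R) : Prop :=
  forall r : nat, (r < k)%N ->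
    (odd r -> log_concave (iter r ratio_seq z)) /\
    (~~ odd r -> log_convex (iter r ratio_seq z)).

Definition infinitely_log_monotonic {R : realFieldType} (z : nat -> R) : Prop :=
  forall k : nat, log_monotonic_order k z.

Definition fuss_catalan {R : realFieldType} (p n : nat) : R :=
  ((p * n)`!)%:R / ((((p - 1) * n).+1)`! * n`!)%:R.

From mathcomp Require Import all_boot all_order all_algebra.
From mathcomp Require Import ring zify.
From mathcomp Require Import boolp reals normedtype derive realfun exp Rstruct.

(* The ratio C_p(n+1) / C_p(n) equals c * prod_(i < p-1) (n + a_i) / (n + b_i) with
   0 < a_i <= b_i.  Since ln (R z) is the forward difference D (ln z), the sequence
   R^r z is log-convex (log-concave) iff D^(r+2) (ln z) >= 0 (<= 0), and
   D (ln z) (n) = ln c - sum_i (ln (n + b_i) - ln (n + a_i)).  Each summand satisfies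
   (-1)^k D^k (ln (n + b) - ln (n + a)) >= 0, because (-1)^k D^k ln is nondecreasing on
   (0, +oo): its derivative is (-1)^k D^k (1/x) = k! / prod_(j <= k) (x + j) >= 0.
   As the Fuss-Catalan numbers are rational, the result over the reals transfers to
   every real field. *)

Set Implicit Arguments.
Unset Strict Implicit.
Unset Printing Implicit Defensive.

Import Order.TTheory GRing.Theory Num.Theory numFieldNormedType.Exports.
Local Open Scope ring_scope.

Definition fdiff {V : zmodType} (u : nat -> V) : nat -> V := fun n => u n.+1 - u n.

Section ForwardDifference.
Variable V : zmodType.
Implicit Types (u v : nat -> V) (k n : nat).

Lemma iter_fdiffS k u n :
  iter k.+1 fdiff u n = iter k fdiff u n.+1 - iter k fdiff u n.
Proof. by []. Qed.

Lemma iter_fdiffD k u v n :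
  iter k fdiff (fun m => u m + v m) n = iter k fdiff u n + iter k fdiff v n.
Proof.
elim: k n => [//|k IH] n.
by rewrite !iter_fdiffS !IH opprD addrACA.
Qed.

Lemma iter_fdiffN k u n : iter k fdiff (fun m => - u m) n = - iter k fdiff u n.
Proof.
elim: k n => [//|k IH] n.
by rewrite !iter_fdiffS !IH opprD.
Qed.

Lemma iter_fdiffB k u v n :
  iter k fdiff (fun m => u m - v m) n = iter k fdiff u n - iter k fdiff v n.
Proof. by rewrite iter_fdiffD iter_fdiffN. Qed.

Lemma iter_fdiff0 k n : iter k fdiff (fun=> 0 : V) n = 0.
Proof. by elim: k n => [//|k IH] n; rewrite iter_fdiffS !IH subrr. Qed.

Lemma iter_fdiffS_cst k (c : V) n : iter k.+1 fdiff (fun=> c) n = 0.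
Proof.
rewrite iterSr (_ : fdiff _ = fun=> 0) ?iter_fdiff0 //.
by apply/funext => m; rewrite /fdiff subrr.
Qed.

Lemma iter_fdiff_sum (I : Type) (r : seq I) (F : I -> nat -> V) k n :
  iter k fdiff (fun m => \sum_(i <- r) F i m) n = \sum_(i <- r) iter k fdiff (F i) n.
Proof.
elim: r => [|i r IH].
  rewrite big_nil (_ : (fun m => _) = fun=> 0) ?iter_fdiff0 //.
  by apply/funext => m; rewrite big_nil.
rewrite big_cons -IH -iter_fdiffD; congr (iter k fdiff _ n).
by apply/funext => m; rewrite big_cons.
Qed.

End ForwardDifference.

Definition rdiff {R : numDomainType} (f : R -> R) : R -> R := fun x => f (x + 1) - f x.

Lemma iter_rdiff_inv (R : numFieldType) k (s : R) : 0 < s ->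
  iter k rdiff (fun y => y^-1) s = (-1) ^+ k * k`!%:R / \prod_(i < k.+1) (s + i%:R).
Proof.
have prod_gt0 j (t : R) : 0 < t -> 0 < \prod_(i < j) (t + i%:R).
  by move=> t0; apply: prodr_gt0 => i _; rewrite ltr_wpDr.
elim: k s => [|k IH] s s0; first by rewrite big_ord1 addr0 expr0 mul1r div1r.
rewrite /= /rdiff IH ?addr_gt0 // IH //.
set P := \prod_(i < k.+2) (s + i%:R).
have P_gt0 : 0 < P by exact: prod_gt0.
have shiftP : \prod_(i < k.+1) (s + 1 + i%:R) = P / s.
  rewrite /P [X in _ = X / _]big_ord_recl /= addr0 [s * _]mulrC mulfK ?gt_eqF //.
  by apply: eq_bigr => i _; rewrite /bump leq0n add1n -natr1 addrA addrAC.
have truncP : \prod_(i < k.+1) (s + i%:R) = P / (s + k.+1%:R).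
  by rewrite /P [X in _ = X / _]big_ord_recr mulfK ?gt_eqF ?ltr_wpDr.
rewrite shiftP truncP factS natrM exprS -natr1.
field.
by rewrite !gt_eqF ?ltr_wpDr ?natr1.
Qed.

Lemma signed_iter_rdiff_inv_ge0 (R : numFieldType) k (s : R) : 0 < s ->
  0 <= (-1) ^+ k * iter k rdiff (fun y => y^-1) s.
Proof.
move=> s0; rewrite iter_rdiff_inv // !mulrA -exprMn mulrNN mulr1 expr1n mul1r.
by apply: divr_ge0 => //; apply: prodr_ge0 => i _; rewrite addr_ge0 // ltW.
Qed.

Lemma iter_fdiff_shift (R : numDomainType) (f : R -> R) (t : R) k n :
  iter k fdiff (fun m => f (m%:R + t)) n = iter k rdiff f (n%:R + t).
Proof.
elim: k n => [//|k IH] n.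
by rewrite iter_fdiffS !IH /= /rdiff -addn1 natrD addrAC.
Qed.

Section RealAnalysis.
Variable R : realType.

Lemma is_derive_iter_rdiff (f df : R -> R) :
  (forall x : R, 0 < x -> is_derive x 1 f (df x)) ->
  forall k (s : R), 0 < s -> is_derive s 1 (iter k rdiff f) (iter k rdiff df s).
Proof.
move=> fd; elim=> [|k IH] s s0 /=; first exact: fd.
have shifted : is_derive s 1 (iter k rdiff f \o shift 1) (iter k rdiff df (s + 1)).
  rewrite -[X in is_derive _ _ _ X]mulr1.
  by apply: is_derive1_comp; [apply: IH; rewrite addr_gt0 | exact: is_derive_shift].
exact: is_deriveB shifted (IH s s0).
Qed.

Lemma ger0_is_derive_le (f df : R -> R) (a b : R) : a <= b ->
  (forall x : R, a <= x <= b -> is_derive x 1 f (df x)) ->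
  (forall x, a <= x <= b -> 0 <= df x) -> f a <= f b.
Proof.
move=> ab fd dfge0.
have [c] : exists2 c, c \in `[a, b]%R & f b - f a = df c * (b - a).
  apply: MVT_segment => // [x|].
    by rewrite in_itv => /andP[ax xb]; apply: fd; rewrite !ltW.
  by apply: derivable_within_continuous => x; rewrite in_itv => /fd [].
rewrite in_itv => /dfge0 dfc0 fab.
by rewrite -subr_ge0 fab mulr_ge0 // subr_ge0.
Qed.

Lemma signed_iter_rdiff_ln_le k (a b : R) : 0 < a -> a <= b ->
  (-1) ^+ k * iter k rdiff (@ln R) a <= (-1) ^+ k * iter k rdiff (@ln R) b.
Proof.
move=> a0 ab.
pose sgn (g : R -> R) x := (-1) ^+ k * iter k rdiff g x.
apply: (@ger0_is_derive_le (sgn (@ln R)) (sgn (fun y => y^-1))) => // x.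
- move=> /andP[ax _]; apply: is_deriveZ.
  apply: (@is_derive_iter_rdiff _ (fun y => y^-1) (@is_derive1_ln R)).
  exact: lt_le_trans ax.
- by move=> /andP[ax _]; apply: signed_iter_rdiff_inv_ge0; exact: lt_le_trans ax.
Qed.

Lemma signed_iter_fdiff_ln_ratio_ge0 k (a b : R) n : 0 < a -> a <= b ->
  0 <= (-1) ^+ k * iter k fdiff (fun m => ln (m%:R + b) - ln (m%:R + a)) n.
Proof.
move=> a0 ab; rewrite iter_fdiffB !iter_fdiff_shift mulrBr subr_ge0.
by apply: signed_iter_rdiff_ln_le; rewrite ?ltr_wpDl // lerD2l.
Qed.

End RealAnalysis.

Lemma iter_ratio_seq_gt0 (F : realFieldType) (z : nat -> F) :
  (forall n, 0 < z n) -> forall r n, 0 < iter r ratio_seq z n.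
Proof. by move=> z0; elim=> [//|r IH] n; rewrite /= /ratio_seq divr_gt0. Qed.

Section LogMonotonicity.
Variable R : realType.
Implicit Types z x : nat -> R.

Lemma ln_prod (I : Type) (r : seq I) (F : I -> R) : (forall i, 0 < F i) ->
  ln (\prod_(i <- r) F i) = \sum_(i <- r) ln (F i).
Proof.
move=> F0; elim: r => [|i r IH]; first by rewrite !big_nil ln1.
by rewrite !big_cons lnM ?IH // posrE // prodr_gt0.
Qed.

Lemma ln_iter_ratio_seq z : (forall n, 0 < z n) ->
  forall r n, ln (iter r ratio_seq z n) = iter r fdiff (fun m => ln (z m)) n.
Proof.
move=> z0; elim=> [//|r IH] n.
by rewrite iter_fdiffS /= /ratio_seq ln_div ?posrE ?iter_ratio_seq_gt0 // !IH.
Qed.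

Lemma fdiff2_ln x n : (forall n, 0 < x n) ->
  iter 2 fdiff (fun m => ln (x m)) n = ln (x n * x n.+2) - ln (x n.+1 ^+ 2).
Proof. by move=> x0; rewrite /= /fdiff lnM ?lnXn ?posrE // mulr2n; ring. Qed.

Lemma log_convex_fdiff2 x : (forall n, 0 < x n) ->
  log_convex x <-> forall n, 0 <= iter 2 fdiff (fun m => ln (x m)) n.
Proof.
move=> x0; have e n : (x n.+1 ^+ 2 <= x n * x n.+2) = (0 <= iter 2 fdiff (fun m => ln (x m)) n).
  by rewrite fdiff2_ln // subr_ge0 ler_ln // posrE ?exprn_gt0 ?mulr_gt0.
by split=> h n; [rewrite -e | rewrite e]; apply: h.
Qed.

Lemma log_concave_fdiff2 x : (forall n, 0 < x n) ->
  log_concave x <-> forall n, iter 2 fdiff (fun m => ln (x m)) n <= 0.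
Proof.
move=> x0; have e n : (x n * x n.+2 <= x n.+1 ^+ 2) = (iter 2 fdiff (fun m => ln (x m)) n <= 0).
  by rewrite fdiff2_ln // subr_le0 ler_ln // posrE ?exprn_gt0 ?mulr_gt0.
by split=> h n; [rewrite -e | rewrite e]; apply: h.
Qed.

Lemma infinitely_log_monotonic_fdiff_ln z : (forall n, 0 < z n) ->
  (forall r n, 0 <= (-1) ^+ r * iter r.+2 fdiff (fun m => ln (z m)) n) ->
  infinitely_log_monotonic z.
Proof.
move=> z0 sgn k r _.
have w0 := iter_ratio_seq_gt0 z0 r.
have fd2 n : iter 2 fdiff (fun m => ln (iter r ratio_seq z m)) n =
    iter r.+2 fdiff (fun m => ln (z m)) n.
  by rewrite (funext (ln_iter_ratio_seq z0 r)) -iterD add2n.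
split=> ro; [apply/log_concave_fdiff2 | apply/log_convex_fdiff2] => // n;
  move: (sgn r n); rewrite -fd2 -signr_odd.
- by rewrite ro expr1 mulN1r oppr_ge0.
- by rewrite (negbTE ro) expr0 mul1r.
Qed.

Theorem infinitely_log_monotonic_ratio z (c : R) s (a b : 'I_s -> R) :
  (forall n, 0 < z n) -> 0 < c -> (forall i, 0 < a i <= b i) ->
  (forall n, z n.+1 = z n * c * \prod_(i < s) ((n%:R + a i) / (n%:R + b i))) ->
  infinitely_log_monotonic z.
Proof.
move=> z0 c0 ab zS; apply: infinitely_log_monotonic_fdiff_ln => // r n.
have a_gt0 i m : 0 < m%:R + a i by rewrite ltr_wpDl //; case/andP: (ab i).
have b_gt0 i m : 0 < m%:R + b i.
  by rewrite ltr_wpDl //; case/andP: (ab i) => /lt_le_trans; apply.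
have dlnz : fdiff (fun m => ln (z m)) =
    (fun m => ln c - \sum_(i < s) (ln (m%:R + b i) - ln (m%:R + a i))).
  apply/funext => m; rewrite /fdiff zS.
  rewrite !lnM ?posrE ?mulr_gt0 ?prodr_gt0 // => [|i _]; last by rewrite divr_gt0.
  rewrite ln_prod => [|i]; last by rewrite divr_gt0.
  under eq_bigr do rewrite ln_div ?posrE //.
  by rewrite !sumrB; ring.
rewrite iterSr dlnz iter_fdiffB iter_fdiffS_cst sub0r iter_fdiff_sum.
rewrite mulrN -mulNr -mulN1r -exprS mulr_sumr.
apply: sumr_ge0 => i _; case/andP: (ab i) => a0 ab_i.
exact: signed_iter_fdiff_ln_ratio_ge0.
Qed.

End LogMonotonicity.

Lemma factD a b : ((a + b)`! = a`! * \prod_(i < b) (a + i.+1))%N.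
Proof.
elim: b => [|b IH]; first by rewrite addn0 big_ord0 muln1.
rewrite addnS factS IH big_ord_recr /= mulnCA; congr (_ * _)%N.
by rewrite mulnC addnS.
Qed.

Lemma fuss_catalan_gt0 (F : realFieldType) p n : 0 < fuss_catalan p n :> F.
Proof. by rewrite divr_gt0 // ltr0n ?muln_gt0 !fact_gt0. Qed.

Lemma fuss_catalanS (F : realFieldType) m n :
  fuss_catalan m.+1 n.+1 = fuss_catalan m.+1 n * m.+1%:R *
    \prod_(i < m) ((m.+1 * n + i.+1)%:R / (m * n + i.+2)%:R) :> F.
Proof.
rewrite /fuss_catalan subn1 /= prodf_div -!natr_prod.
have -> : (m.+1 * n.+1 = m.+1 * n + m.+1)%N by rewrite mulnS addnC.
have -> : ((m * n.+1).+1 = (m * n).+1 + m)%N by rewrite mulnS; lia.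
rewrite !factD big_ord_recr /= factS.
have -> : (\prod_(i < m) ((m * n).+1 + i.+1) = \prod_(i < m) (m * n + i.+2))%N.
  by apply: eq_bigr => i _; rewrite addSnnS.
have -> : (m.+1 * n + m.+1 = m.+1 * n.+1)%N by rewrite mulnS addnC.
rewrite !natrM.
field.
rewrite !gt_eqF ?ltr_pwDl ?mulr_ge0 ?ltr0n ?fact_gt0 //.
by apply: prodn_gt0 => i; rewrite addnS.
Qed.

Lemma fuss_catalan_ratio (F : realFieldType) m n : (0 < m)%N ->
  fuss_catalan m.+1 n.+1 = fuss_catalan m.+1 n * (m.+1%:R * (m.+1%:R / m%:R) ^+ m) *
    \prod_(i < m) ((n%:R + i.+1%:R / m.+1%:R) / (n%:R + i.+2%:R / m%:R)) :> F.
Proof.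
move=> m_gt0.
have factor (i : 'I_m) : (m.+1 * n + i.+1)%:R / (m * n + i.+2)%:R =
    m.+1%:R / m%:R * ((n%:R + i.+1%:R / m.+1%:R) / (n%:R + i.+2%:R / m%:R)) :> F.
  rewrite !natrD !natrM; field.
  by rewrite nat1r -natrM -!natrD !pnatr_eq0; lia.
rewrite fuss_catalanS; under eq_bigr do rewrite factor.
rewrite big_split prodr_const card_ord /=.
by rewrite !mulrA.
Qed.

Lemma fuss_catalan_infinitely_log_monotonic (R : realType) m :
  infinitely_log_monotonic (fun n => @fuss_catalan R m.+2 n).
Proof.
apply: (infinitely_log_monotonic_ratio
  (c := m.+2%:R * (m.+2%:R / m.+1%:R) ^+ m.+1)
  (a := fun i : 'I_m.+1 => i.+1%:R / m.+2%:R) (b := fun i => i.+2%:R / m.+1%:R)).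
- exact: fuss_catalan_gt0.
- by rewrite mulr_gt0 // exprn_gt0 // divr_gt0.
- move=> i; rewrite divr_gt0 //= ler_pdivrMr // mulrAC ler_pdivlMr // -!natrM ler_nat.
  nia.
- by move=> n; rewrite fuss_catalan_ratio.
Qed.

Section RationalTransfer.
Variable F : realFieldType.
Implicit Type u : nat -> rat.

Lemma fuss_catalan_ratr p :
  (fun n => fuss_catalan p n) = (fun n => ratr (fuss_catalan p n)) :> (nat -> F).
Proof. by apply/funext => n; rewrite /fuss_catalan fmorph_div !rmorph_nat. Qed.

Lemma iter_ratio_seq_ratr u r :
  iter r ratio_seq (fun n => ratr (u n) : F) = (fun n => ratr (iter r ratio_seq u n)).
Proof. by elim: r => [//|r IH]; apply/funext => n; rewrite /= IH /ratio_seq fmorph_div. Qed.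

Lemma log_convex_ratr u : log_convex (fun n => ratr (u n) : F) <-> log_convex u.
Proof.
have e n : (ratr (u n.+1) ^+ 2 <= ratr (u n) * ratr (u n.+2) :> F) =
    (u n.+1 ^+ 2 <= u n * u n.+2) by rewrite -rmorphXn -rmorphM ler_rat.
by split=> h n; [rewrite -e | rewrite e]; apply: h.
Qed.

Lemma log_concave_ratr u : log_concave (fun n => ratr (u n) : F) <-> log_concave u.
Proof.
have e n : (ratr (u n) * ratr (u n.+2) <= ratr (u n.+1) ^+ 2 :> F) =
    (u n * u n.+2 <= u n.+1 ^+ 2) by rewrite -rmorphXn -rmorphM ler_rat.
by split=> h n; [rewrite -e | rewrite e]; apply: h.
Qed.

Lemma infinitely_log_monotonic_ratr u :
  infinitely_log_monotonic (fun n => ratr (u n) : F) <-> infinitely_log_monotonic u.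
Proof.
split=> h k r rk; have [hodd heven] := h k r rk; rewrite ?iter_ratio_seq_ratr in hodd heven *.
  by split=> ro; [apply/(log_concave_ratr _).1/hodd | apply/(log_convex_ratr _).1/heven].
by split=> ro; [apply/log_concave_ratr/hodd | apply/log_convex_ratr/heven].
Qed.

End RationalTransfer.

Theorem corollary3p4 (R : realFieldType) (p : nat) (hp : (2 <= p)%N) :
  infinitely_log_monotonic (fun n : nat => @fuss_catalan R p n).
Proof.
have [m ->] : exists m, p = m.+2 by exists p.-2; lia.
rewrite fuss_catalan_ratr; apply/infinitely_log_monotonic_ratr.
apply/(infinitely_log_monotonic_ratr Rdefinitions.R); rewrite -fuss_catalan_ratr.
exact: fuss_catalan_infinitely_log_monotonic.
Qed.
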